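(* $\mathsf{ICM}$ equals the variety generated by the class $\mathsf{ICF}$ of implicitly closed fields, and the term $t(x,y,z)=x(x-y)(x-y)^*+z(1-(x-y)(x-y)^* )$ satisfies, for every $\mathbf A\in\mathsf{ICF}$ and $a,b,c\in A$, $t^{\mathbf A}(a,b,c)=c$ if $a=b$ and $t^{\mathbf A}(a,b,c)=a$ otherwise. Consequently $\mathsf{ICM}$ is a discriminator variety.
   Context: A field is weakly rooted if it has characteristic $0$, or has prime characteristic $p$ and every element has a $p$-th root. Weak inverse: $a^*=a^{-1}$ if $a\ne0$, $0^*=0$. Weak $p$-root (in a weakly rooted field, $p$ prime): $r_p(a)=\sqrt[p]{a}$ if the characteristic is $p$, and $0$ otherwise. An implicitly closed field is a weakly rooted field (ring language) expanded by $(\,)^*$ and all $r_p$; $\mathsf{ICF}$ is their class. $\mathsf{ICM}$ is the class of algebras isomorphic to subalgebras of direct products of members of $\mathsf{ICF}$. A variety is a discriminator variety if it is generated by a class $\mathsf K$ admitting a term $t(x,y,z)$ with $t^{\mathbf A}(a,b,c)=c$ if $a=b$ and $=a$ otherwise, for all $\mathbf A\in\mathsf K$. *)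

From HB Require Import structures.
From mathcomp Require Import all_boot all_order all_algebra.
Import GRing.Theory.
Local Open Scope ring_scope.

Definition primeT := {p : nat | prime p}.

Record ICAlg := {
  car   : Type;
  zero  : car;
  one   : car;
  add   : car -> car -> car;
  opp   : car -> car;
  mul   : car -> car -> car;
  wstar : car -> car;
  wroot : primeT -> car -> car
}.

Set Implicit Arguments. Unset Strict Implicit. Unset Printing Implicit Defensive.

Definition is_hom (A B : ICAlg) (f : car A -> car B) : Prop :=
  f (zero A) = zero B /\ f (one A) = one B /\
  (forall x y, f (add A x y) = add B (f x) (f y)) /\
  (forall x, f (opp A x) = opp B (f x)) /\
  (forall x y, f (mul A x y) = mul B (f x) (f y)) /\
  (forall x, f (wstar A x) = wstar B (f x)) /\
  (forall p x, f (wroot A p x) = wroot B p (f x)).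

Definition isomorphic (A B : ICAlg) : Prop :=
  exists f : car A -> car B, is_hom f /\ bijective f.

Definition prodAlg (I : Type) (F : I -> ICAlg) : ICAlg := {|
  car := forall i, car (F i);
  zero := fun i => zero (F i);
  one := fun i => one (F i);
  add := fun x y i => add (F i) (x i) (y i);
  opp := fun x i => opp (F i) (x i);
  mul := fun x y i => mul (F i) (x i) (y i);
  wstar := fun x i => wstar (F i) (x i);
  wroot := fun p x i => wroot (F i) p (x i) |}.

Definition algClass := ICAlg -> Prop.

(* A variety: class closed under homomorphic images (H), subalgebras up to
   isomorphism, i.e. domains of embeddings (S), and direct products (P). *)
Definition is_variety (V : algClass) : Prop :=
  (forall (A B : ICAlg) (f : car A -> car B),
      V A -> is_hom f -> (forall b, exists a, f a = b) -> V B) /\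
  (forall (A B : ICAlg) (f : car A -> car B),
      V B -> is_hom f -> injective f -> V A) /\
  (forall (I : Type) (F : I -> ICAlg), (forall i, V (F i)) -> V (prodAlg F)).

Definition varGen (K : algClass) : algClass :=
  fun A => forall V : algClass, is_variety V -> (forall B, K B -> V B) -> V A.

Definition weakly_rooted (F : fieldType) : Prop :=
  forall p : nat, p \in [pchar F] -> forall a : F, exists b : F, b ^+ p == a.

Section ICFofField.
Variables (F : fieldType) (hF : weakly_rooted F).

Definition weak_root (p : primeT) (a : F) : F :=
  match boolP (sval p \in [pchar F]) with
  | AltTrue H => xchoose (hF H a)
  | AltFalse _ => 0
  end.

(* weak inverse: MathComp's inverse satisfies 0^-1 = 0 in a field *)
Definition ICF_of : ICAlg := {|
  car := F;
  zero := 0; one := 1;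
  add := fun x y => x + y;
  opp := fun x => - x;
  mul := fun x y => x * y;
  wstar := fun x => x^-1;
  wroot := weak_root |}.
End ICFofField.

Definition ICF : algClass :=
  fun A => exists (F : fieldType) (hF : weakly_rooted F), isomorphic A (ICF_of hF).

Definition ICM : algClass :=
  fun A => exists (I : Type) (F : I -> ICAlg), (forall i, ICF (F i)) /\
    exists f : car A -> car (prodAlg F), is_hom f /\ injective f.

Inductive term : Type :=
  | tVar : nat -> term
  | tZero : term
  | tOne : term
  | tAdd : term -> term -> term
  | tOpp : term -> term
  | tMul : term -> term -> term
  | tStar : term -> term
  | tRoot : primeT -> term -> term.

Fixpoint eval (A : ICAlg) (e : nat -> car A) (t : term) : car A :=
  match t with
  | tVar n => e n
  | tZero => zero A
  | tOne => one A
  | tAdd s u => add A (eval e s) (eval e u)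
  | tOpp s => opp A (eval e s)
  | tMul s u => mul A (eval e s) (eval e u)
  | tStar s => wstar A (eval e s)
  | tRoot p s => wroot A p (eval e s)
  end.

Definition val3 (A : ICAlg) (a b c : car A) : nat -> car A :=
  fun n => match n with 0 => a | 1 => b | _ => c end.

Definition eval3 (A : ICAlg) (t : term) (a b c : car A) : car A :=
  eval (val3 a b c) t.

Definition discriminator_on (K : algClass) (t : term) : Prop :=
  forall A, K A -> forall a b c : car A,
    (a = b -> eval3 t a b c = c) /\ (a <> b -> eval3 t a b c = a).

Definition discriminator_variety (V : algClass) : Prop :=
  exists (K : algClass) (t : term),
    (forall A, V A <-> varGen K A) /\ discriminator_on K t.

Definition tx := tVar 0.
Definition ty := tVar 1.
Definition tz := tVar 2.
Definition tsub (s u : term) := tAdd s (tOpp u).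
Definition disc_term : term :=
  tAdd (tMul (tMul tx (tsub tx ty)) (tStar (tsub tx ty)))
       (tMul tz (tsub tOne (tMul (tsub tx ty) (tStar (tsub tx ty))))).

(* An implicitly closed field satisfies the identities [icm_axiom]: those of
   commutative rings, the regularity laws [x x^* x = x] and [x^* x^* x = x^*], and two
   identities pinning down [r_p]; hence so does every member of ICM. Conversely a model
   of [icm_axiom] is a von Neumann regular commutative ring. There every nonzero [d] is
   missed by some prime ideal (one maximal among those missing the idempotent [d d^*]),
   and every prime quotient is an implicitly closed field, so the model embeds into the
   product of its prime quotients. Thus ICM is the class of models of [icm_axiom], a
   variety, and the least one containing ICF. On a field, [disc_term] evaluates to [x]
   when [x - y] is invertible and to [z] when [x = y]. *)

From Pilot Require Import Defs.
From HB Require Import structures.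
From mathcomp Require Import all_boot all_order all_algebra.
From mathcomp Require Import boolp classical_sets ring.
Import GRing.Theory.
Set Implicit Arguments. Unset Strict Implicit. Unset Printing Implicit Defensive.
Local Open Scope ring_scope.
Local Open Scope classical_set_scope.

Section PrimeIdeals.
Variable R : comPzRingType.

Record is_ideal (I : set R) : Prop := IsIdeal {
  ideal0 : I 0;
  idealD : forall x y, I x -> I y -> I (x + y);
  idealMl : forall x y, I y -> I (x * y) }.

Record is_prime_ideal (P : set R) : Prop := IsPrimeIdeal {
  prime_ideal_ideal :> is_ideal P;
  prime_ideal1 : ~ P 1;
  prime_idealM : forall x y, P (x * y) -> P x \/ P y }.

(* [0] is left out so that the union of the empty chain, [set0], qualifies in
   Zorn's lemma. *)
Definition avoiding_ideal (e : R) (A : set R) :=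
  [/\ forall x y, A x -> A y -> A (x + y), forall x y, A y -> A (x * y) & ~ A e].

Lemma exists_maximal_avoiding_ideal (e : R) :
  exists A, avoiding_ideal e A /\ forall B, A `<` B -> ~ avoiding_ideal e B.
Proof.
apply: Zorn_bigcup => F Favoid Ftot; split.
- move=> x y [X FX Xx] [Y FY Yy].
  have [[Xadd _ _] [Yadd _ _]] := (Favoid _ FX, Favoid _ FY).
  have [XY|YX] := Ftot _ _ FX FY.
    by exists Y => //; apply: Yadd => //; apply: XY.
  by exists X => //; apply: Xadd => //; apply: YX.
- by move=> x y [X FX Xy]; exists X => //; have [_ Xmul _] := Favoid _ FX; apply: Xmul.
- by move=> [X FX Xe]; have [_ _] := Favoid _ FX; apply.
Qed.

Section MaximalAvoidingIdeal.
Variables (e : R) (A : set R).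
Hypotheses (en0 : e != 0) (Aavoid : avoiding_ideal e A)
  (Amax : forall B, A `<` B -> ~ avoiding_ideal e B).

Let Aadd : forall x y, A x -> A y -> A (x + y). Proof. by case: Aavoid. Qed.
Let Amul : forall x y, A y -> A (x * y). Proof. by case: Aavoid. Qed.
Let Ae : ~ A e. Proof. by case: Aavoid. Qed.

Lemma maximal_avoiding_ideal0 : A 0.
Proof.
apply: contrapT => nA0.
apply: (Amax (B := A `|` [set 0])).
  by split => [x Ax|/(_ 0 (or_intror erefl))]; [left|].
split.
- by move=> x y [Ax|->] [Ay|->]; rewrite ?addr0 ?add0r; [left; apply: Aadd|left|left|right].
- by move=> x y [Ay|->]; [left; apply: Amul|right; rewrite mulr0].
- by case=> // /eqP; rewrite (negPf en0).
Qed.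

Lemma maximal_avoiding_ideal_span x :
  ~ A x -> exists m u, A m /\ e = m + x * u.
Proof.
move=> nAx; apply: contrapT => nspan.
pose Ax := [set z | exists m u, A m /\ z = m + x * u].
apply: (Amax (B := Ax)).
  split; first by move=> z Az; exists z, 0; rewrite mulr0 addr0.
  move=> H; apply: nAx; apply: H; exists 0, 1.
  by rewrite mulr1 add0r; split => //; exact: maximal_avoiding_ideal0.
split => //.
- move=> _ _ [m1 [u1 [Am1 ->]]] [m2 [u2 [Am2 ->]]].
  by exists (m1 + m2), (u1 + u2); split; [exact: Aadd | ring].
- move=> z _ [m [u [Am ->]]].
  by exists (z * m), (z * u); split; [exact: Amul | ring].
Qed.

Lemma maximal_avoiding_ideal_prime : e * e = e -> is_prime_ideal A.
Proof.
move=> ee; split; first by split => //; exact: maximal_avoiding_ideal0.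
  by move=> A1; apply: Ae; rewrite -(mulr1 e); exact: Amul.
move=> x y Axy; have [Ax|nAx] := pselect (A x); first by left.
have [Ay|nAy] := pselect (A y); first by right.
exfalso; apply: Ae.
have [m1 [u1 [Am1 E1]]] := maximal_avoiding_ideal_span nAx.
have [m2 [u2 [Am2 E2]]] := maximal_avoiding_ideal_span nAy.
have -> : e = (m2 + y * u2) * m1 + ((u1 * u2) * (x * y) + (x * u1) * m2).
  by rewrite -{1}ee {1}E1 {1}E2; ring.
by apply: Aadd; [exact: Amul | apply: Aadd; exact: Amul].
Qed.

End MaximalAvoidingIdeal.

Lemma exists_prime_ideal_avoiding_idempotent (e : R) :
  e * e = e -> e != 0 -> exists2 P, is_prime_ideal P & ~ P e.
Proof.
move=> ee en0; have [A [Aavoid Amax]] := exists_maximal_avoiding_ideal e.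
by exists A; [exact: (maximal_avoiding_ideal_prime en0 Aavoid Amax) | case: Aavoid].
Qed.

End PrimeIdeals.

(* The ring need only be von Neumann regular: as [x (inv x * x - 1) = 0], [inv x]
   inverts [x] modulo every prime ideal missing [x]. *)
Section RegularQuotient.
Local Open Scope quotient_scope.
Variables (R : comNzRingType) (inv : R -> R).
Hypotheses (regularV : forall x, x * inv x * x = x)
  (regularVV : forall x, inv x * inv x * x = inv x).
Variables (P : set R) (Pprime : is_prime_ideal P).

Definition prime_pred : pred R := fun x => `[< P x >].

Lemma prime_pred_idealr : idealr_closed prime_pred.
Proof.
split; first exact/asboolP/(ideal0 Pprime).
  by apply/negP => /asboolP; exact: prime_ideal1.
move=> a x y /asboolP Px /asboolP Py; apply/asboolP.
exact/(idealD Pprime)/Py/(idealMl Pprime).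
Qed.

Let Pidealr : idealr R := HB.pack prime_pred (isIdealr.Build R prime_pred prime_pred_idealr).

Local Notation Q := {ideal_quot Pidealr}.

Lemma pi_eq0P x : \pi_Q x = 0 <-> P x.
Proof.
split=> [/eqP|Px]; last apply/eqP; rewrite piE Quotient.equivE subr0.
  by move/asboolP.
exact/asboolP.
Qed.

Lemma pi_inv_regular x : ~ P x -> \pi_Q (inv x) * \pi_Q x = 1.
Proof.
move=> nPx; rewrite -rmorphM; apply/eqP; rewrite piE Quotient.equivE; apply/asboolP.
have : P (x * (inv x * x - 1)).
  by rewrite mulrBr mulrA regularV mulr1 subrr; exact: (ideal0 Pprime).
by case/(prime_idealM Pprime).
Qed.

Lemma inv_ideal x : P x -> P (inv x).
Proof. by move=> Px; rewrite -regularVV; exact: (idealMl Pprime). Qed.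

Definition qinv (q : Q) : Q := \pi_Q (inv (repr q)).

Lemma qinv_mulV (q : Q) : q != 0 -> qinv q * q = 1.
Proof.
move=> qn0; rewrite /qinv -{2}[q]reprK; apply: pi_inv_regular.
by move/pi_eq0P; rewrite reprK; exact/eqP.
Qed.

Lemma qinv0 : qinv 0 = 0.
Proof. by apply/pi_eq0P/inv_ideal/pi_eq0P; rewrite reprK. Qed.

Definition quot_field : fieldType :=
  HB.pack Q (GRing.ComNzRing_isField.Build Q qinv_mulV qinv0).

Definition quot_proj : {rmorphism R -> quot_field} := \pi_Q.

Lemma quot_proj_eq0 x : quot_proj x = 0 <-> P x.
Proof. exact: pi_eq0P. Qed.

Lemma quot_proj_inv x : quot_proj (inv x) = (quot_proj x)^-1.
Proof.
have [Px|nPx] := pselect (P x).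
  have -> : quot_proj x = 0 by exact/quot_proj_eq0.
  by rewrite invr0; apply/quot_proj_eq0/inv_ideal.
have pin0 : quot_proj x != 0 by apply/eqP => /quot_proj_eq0.
by apply: (mulIf pin0); rewrite mulVf // pi_inv_regular.
Qed.

Lemma quot_proj_surj (a : quot_field) : exists x, quot_proj x = a.
Proof. by exists (repr a); exact: reprK. Qed.

End RegularQuotient.

Definition satisfies (A : ICAlg) (s t : term) :=
  forall e : nat -> car A, eval e s = eval e t.

Definition models (E : term -> term -> Prop) (A : ICAlg) :=
  forall s t, E s t -> satisfies A s t.

Lemma eval_hom (A B : ICAlg) (f : car A -> car B) (e : nat -> car A) t :
  is_hom f -> f (eval e t) = eval (f \o e) t.
Proof.
move=> [f0 [f1 [fD [fN [fM [fS fR]]]]]].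
by elim: t => //= [s IHs u IHu|s IHs|s IHs u IHu|s IHs|p s IHs];
  rewrite ?fD ?fN ?fM ?fS ?fR ?IHs ?IHu.
Qed.

Lemma satisfies_inj_hom (A B : ICAlg) (f : car A -> car B) s t :
  is_hom f -> injective f -> satisfies B s t -> satisfies A s t.
Proof. by move=> fhom finj Bst e; apply: finj; rewrite !eval_hom. Qed.

Lemma satisfies_surj_hom (A B : ICAlg) (f : car A -> car B) s t :
  is_hom f -> (forall b, exists a, f a = b) -> satisfies A s t -> satisfies B s t.
Proof.
move=> fhom /choice[g fgK] Ast e.
have -> : e = f \o (g \o e) by apply: funext => n; rewrite /= fgK.
by rewrite -!(eval_hom _ _ fhom) Ast.
Qed.

Lemma eval_prodAlg (I : Type) (F : I -> ICAlg) (e : nat -> car (prodAlg F)) t i :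
  eval e t i = eval (fun n => e n i) t.
Proof.
by elim: t => //= [s IHs u IHu|s IHs|s IHs u IHu|s IHs|p s IHs]; rewrite ?IHs ?IHu.
Qed.

Lemma satisfies_prodAlg (I : Type) (F : I -> ICAlg) s t :
  (forall i, satisfies (F i) s t) -> satisfies (prodAlg F) s t.
Proof.
by move=> Fst e; apply: functional_extensionality_dep => i; rewrite !eval_prodAlg Fst.
Qed.

Lemma models_variety (E : term -> term -> Prop) : is_variety (models E).
Proof.
split; [|split].
- by move=> A B f AE fhom fsurj s t /AE; exact: satisfies_surj_hom fhom fsurj.
- by move=> A B f BE fhom finj s t /BE; exact: satisfies_inj_hom fhom finj.
- by move=> I F FE s t st; apply: satisfies_prodAlg => i; exact: FE.
Qed.

Fixpoint term_nat (n : nat) : term :=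
  if n is n'.+1 then tAdd tOne (term_nat n') else tZero.

Fixpoint term_exp (t : term) (n : nat) : term :=
  if n is n'.+1 then tMul t (term_exp t n') else tOne.

(* In a field, [1 - p p^*] is [1] in characteristic [p] and [0] otherwise, so
   [ax_root] makes [r_p] a [p]-th root exactly in characteristic [p]. *)
Inductive icm_axiom : term -> term -> Prop :=
| ax_addA : icm_axiom (tAdd tx (tAdd ty tz)) (tAdd (tAdd tx ty) tz)
| ax_addC : icm_axiom (tAdd tx ty) (tAdd ty tx)
| ax_add0 : icm_axiom (tAdd tZero tx) tx
| ax_addN : icm_axiom (tAdd (tOpp tx) tx) tZero
| ax_mulA : icm_axiom (tMul tx (tMul ty tz)) (tMul (tMul tx ty) tz)
| ax_mulC : icm_axiom (tMul tx ty) (tMul ty tx)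
| ax_mul1 : icm_axiom (tMul tOne tx) tx
| ax_mulD : icm_axiom (tMul (tAdd tx ty) tz) (tAdd (tMul tx tz) (tMul ty tz))
| ax_regular : icm_axiom (tMul (tMul tx (tStar tx)) tx) tx
| ax_star_regular : icm_axiom (tMul (tMul (tStar tx) (tStar tx)) tx) (tStar tx)
| ax_root_char (p : primeT) : icm_axiom (tMul (tRoot p tx) (term_nat (sval p))) tZero
| ax_root (p : primeT) : icm_axiom
    (tMul (tsub (term_exp (tRoot p tx) (sval p)) tx)
          (tsub tOne (tMul (term_nat (sval p)) (tStar (term_nat (sval p)))))) tZero.

Section ImplicitlyClosedField.
Variables (F : fieldType) (hF : weakly_rooted F).

Lemma eval_term_nat (e : nat -> F) n : @eval (ICF_of hF) e (term_nat n) = n%:R.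
Proof. by elim: n => //= n ->; rewrite mulrS. Qed.

Lemma eval_term_exp (e : nat -> F) t n :
  @eval (ICF_of hF) e (term_exp t n) = @eval (ICF_of hF) e t ^+ n.
Proof. by elim: n => //= n ->; rewrite exprS. Qed.

Lemma weak_root_expn p a : sval p \in [pchar F] -> weak_root hF p a ^+ sval p = a.
Proof.
move=> pchar; rewrite /weak_root.
case: {-}_ / boolP => [pchar'|]; last by rewrite pchar.
exact/eqP/(xchooseP (hF pchar' a)).
Qed.

Lemma weak_root_nchar p a : sval p \notin [pchar F] -> weak_root hF p a = 0.
Proof.
move=> npchar; rewrite /weak_root.
by case: {-}_ / boolP => // pchar; rewrite pchar in npchar.
Qed.

Lemma ICF_of_models : models icm_axiom (ICF_of hF).
Proof.
move=> s t [] => [||||||||||p|p] e; rewrite /= ?eval_term_nat ?eval_term_exp.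
- exact: addrA.
- exact: addrC.
- exact: add0r.
- exact: addNr.
- exact: mulrA.
- exact: mulrC.
- exact: mul1r.
- exact: mulrDl.
- have [->|xn0] := eqVneq (e 0%N) 0; first by rewrite !mul0r.
  by rewrite divff // mul1r.
- have [->|xn0] := eqVneq (e 0%N) 0; first by rewrite invr0 !mul0r.
  by rewrite -mulrA mulVf // mulr1.
- have [pchar|npchar] := boolP (sval p \in [pchar F]).
    by rewrite (pcharf0 pchar) mulr0.
  by rewrite weak_root_nchar // mul0r.
- have [pchar|npchar] := boolP (sval p \in [pchar F]).
    by rewrite weak_root_expn // subrr mul0r.
  have pn0 : (sval p)%:R != 0 :> F.
    by apply: contra npchar => p0; rewrite inE (svalP p) p0.
  by rewrite divff // subrr mulr0.
Qed.

End ImplicitlyClosedField.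

Lemma ICF_models A : ICF A -> models icm_axiom A.
Proof.
move=> [F [hF [f [fhom [g fK _]]]]] s t st.
exact: (satisfies_inj_hom fhom (can_inj fK) (ICF_of_models st)).
Qed.

Lemma ICM_models A : ICM A -> models icm_axiom A.
Proof.
move=> [I [F [FICF [f [fhom finj]]]]] s t st.
apply: (satisfies_inj_hom fhom finj); apply: satisfies_prodAlg => i.
exact: ICF_models.
Qed.

Section AxiomModel.
Variable B : ICAlg.
Hypothesis Bmodel : models icm_axiom B.

Local Definition T := car B.
HB.instance Definition _ := gen_eqMixin T.
HB.instance Definition _ := gen_choiceMixin T.

Let addA : associative (Defs.add B) := fun x y z => Bmodel ax_addA (val3 x y z).
Let addC : commutative (Defs.add B) := fun x y => Bmodel ax_addC (val3 x y x).
Let add0 : left_id (Defs.zero B) (Defs.add B) := fun x => Bmodel ax_add0 (val3 x x x).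
Let addN : left_inverse (Defs.zero B) (Defs.opp B) (Defs.add B) :=
  fun x => Bmodel ax_addN (val3 x x x).
HB.instance Definition _ := GRing.isZmodule.Build T addA addC add0 addN.

Let mulA : associative (Defs.mul B) := fun x y z => Bmodel ax_mulA (val3 x y z).
Let mulC : commutative (Defs.mul B) := fun x y => Bmodel ax_mulC (val3 x y x).
Let mul1 : left_id (Defs.one B) (Defs.mul B) := fun x => Bmodel ax_mul1 (val3 x x x).
Let mulD : left_distributive (Defs.mul B) (Defs.add B) :=
  fun x y z => Bmodel ax_mulD (val3 x y z).
HB.instance Definition _ := GRing.Zmodule_isComPzRing.Build T mulA mulC mul1 mulD.

Local Notation wst x := (wstar B x : T).
Local Notation r p x := (wroot B p x : T).

Lemma eval_term_nat_model (e : nat -> T) n : eval e (term_nat n) = n%:R :> T.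
Proof. by elim: n => //= n ->; rewrite mulrS. Qed.

Lemma eval_term_exp_model (e : nat -> T) t n : eval e (term_exp t n) = (eval e t : T) ^+ n.
Proof. by elim: n => //= n ->; rewrite exprS. Qed.

Lemma wstar_regular (x : T) : x * wst x * x = x.
Proof. exact: (Bmodel ax_regular (val3 x x x)). Qed.

Lemma wstar_regularV (x : T) : wst x * wst x * x = wst x.
Proof. exact: (Bmodel ax_star_regular (val3 x x x)). Qed.

Lemma wroot_char p (x : T) : r p x * (sval p)%:R = 0.
Proof. by have := Bmodel (ax_root_char p) (val3 x x x); rewrite /= eval_term_nat_model. Qed.

Lemma wroot_expn p (x : T) :
  (r p x ^+ sval p - x) * (1 - (sval p)%:R * wst ((sval p)%:R : T)) = 0.
Proof.
by have := Bmodel (ax_root p) (val3 x x x); rewrite /= eval_term_exp_model eval_term_nat_model.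
Qed.

Section NontrivialModel.
Hypothesis one_neq0 : (1 : T) != 0.
HB.instance Definition _ := GRing.PzSemiRing_isNonZero.Build T one_neq0.

Definition prime_ideals := {P : set T | is_prime_ideal P}.

Local Notation qfield P := (quot_field wstar_regular wstar_regularV (svalP P)).
Local Notation proj P := (quot_proj wstar_regular wstar_regularV (svalP P)).

Let proj_eq0 (P : prime_ideals) x : proj P x = 0 <-> sval P x.
Proof. exact: quot_proj_eq0. Qed.

Let proj_inv (P : prime_ideals) x : proj P (wst x) = (proj P x)^-1.
Proof. exact: quot_proj_inv. Qed.

Lemma quot_proj_wroot_expn (P : prime_ideals) p (x : T) :
  sval p \in [pchar qfield P] -> proj P (r p x) ^+ sval p = proj P x.
Proof.
move=> pchar; pose n : T := (sval p)%:R.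
have Pn : sval P n by apply/proj_eq0; rewrite rmorph_nat (pcharf0 pchar).
have nPq : ~ sval P (1 - n * wst n).
  move=> Pq; apply: (prime_ideal1 (svalP P)).
  have -> : 1 = (1 - n * wst n) + wst n * n by rewrite mulrC subrK.
  by apply: (idealD (svalP P)) => //; exact: (idealMl (svalP P)).
have : sval P ((r p x ^+ sval p - x) * (1 - n * wst n)).
  by rewrite wroot_expn; exact: (ideal0 (svalP P)).
case/(prime_idealM (svalP P)) => // /proj_eq0.
by rewrite rmorphB rmorphXn => /eqP; rewrite subr_eq0 => /eqP.
Qed.

Lemma quot_weakly_rooted (P : prime_ideals) : weakly_rooted (qfield P).
Proof.
move=> p pchar a; have [x <-] := quot_proj_surj a.
pose p' : primeT := exist _ p (pcharf_prime pchar).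
by exists (proj P (r p' x)); rewrite (quot_proj_wroot_expn (p := p')).
Qed.

Lemma quot_proj_wroot (P : prime_ideals) p (x : T) :
  proj P (r p x) = weak_root (@quot_weakly_rooted P) p (proj P x).
Proof.
have [pchar|npchar] := boolP (sval p \in [pchar qfield P]).
  apply: (fmorph_inj (pFrobenius_aut pchar)).
  by rewrite /= !pFrobenius_autE weak_root_expn // quot_proj_wroot_expn.
rewrite weak_root_nchar //; apply/proj_eq0.
have : sval P (r p x * (sval p)%:R) by rewrite wroot_char; exact: (ideal0 (svalP P)).
case/(prime_idealM (svalP P)) => // /proj_eq0; rewrite rmorph_nat => p0.
by move: npchar; rewrite inE (svalP p) p0 eqxx.
Qed.

Definition quot_embed (x : T) : car (prodAlg (fun P => ICF_of (@quot_weakly_rooted P))) :=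
  fun P => proj P x.

Lemma quot_embed_hom : is_hom quot_embed.
Proof.
by do ![split]; intros; apply: functional_extensionality_dep => P;
  rewrite /quot_embed /= ?rmorph0 ?rmorph1 ?rmorphD ?rmorphN ?rmorphM ?proj_inv ?quot_proj_wroot.
Qed.

Lemma quot_embed_inj : injective quot_embed.
Proof.
move=> a b eq_ab; apply/eqP; rewrite -subr_eq0; apply/negPn/negP => dn0.
set d := a - b; pose e := d * wst d.
have ee : e * e = e by rewrite /e mulrA wstar_regular.
have en0 : e != 0.
  apply: contra dn0 => /eqP e0.
  by rewrite -[a - b]wstar_regular -/d -/e e0 mul0r.
(* [e] lies in every ideal containing [d] and conversely, as [d = e d]. *)
have [P Pprime nPe] := exists_prime_ideal_avoiding_idempotent ee en0.
apply: nPe; rewrite /e mulrC; apply: (idealMl Pprime).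
have := congr1 (@^~ (exist _ P Pprime)) eq_ab; rewrite /quot_embed => eq_ab'.
by apply/(proj_eq0 (exist _ P Pprime)); rewrite rmorphB eq_ab' subrr.
Qed.

Lemma nontrivial_model_ICM : ICM B.
Proof.
exists prime_ideals, (fun P => ICF_of (@quot_weakly_rooted P)); split.
  by move=> P; exists (qfield P), (@quot_weakly_rooted P), id; split; [do ![split] | exists id].
by exists quot_embed; split; [exact: quot_embed_hom | exact: quot_embed_inj].
Qed.

End NontrivialModel.

Lemma trivial_model_ICM : (1 : T) = 0 -> ICM B.
Proof.
move=> one0; exists void, (fun i : void => match i with end); split; first by case.
exists (fun _ (i : void) => match i with end); split.
  by do ![split]; intros; apply: functional_extensionality_dep; case.
have all0 (x : T) : x = 0 by rewrite -[x]mulr1 one0 mulr0.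
by move=> a b _; rewrite (all0 a) (all0 b).
Qed.

Lemma model_ICM : ICM B.
Proof.
by have [/trivial_model_ICM|/nontrivial_model_ICM] := eqVneq (1 : T) 0.
Qed.

End AxiomModel.

Lemma ICM_modelsE : ICM = models icm_axiom.
Proof.
by apply: funext => A; apply: propext; split; [exact: ICM_models | exact: model_ICM].
Qed.

Lemma ICM_variety : is_variety ICM.
Proof. by rewrite ICM_modelsE; exact: models_variety. Qed.

Lemma ICM_varGen_ICF A : ICM A <-> varGen ICF A.
Proof.
split.
  move=> [I [F [FICF [f [fhom finj]]]]] V [_ [VS VP]] ICF_V.
  by apply: (VS _ _ f) fhom finj; apply: VP => i; exact: ICF_V.
apply; first exact: ICM_variety.
by move=> B /ICF_models; rewrite -ICM_modelsE.
Qed.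

Lemma eval3_disc_term_ICF_of (F : fieldType) (hF : weakly_rooted F) (a b c : F) :
  @eval3 (ICF_of hF) disc_term a b c =
    a * (a - b) * (a - b)^-1 + c * (1 - (a - b) * (a - b)^-1).
Proof. by []. Qed.

Lemma disc_term_ICF : discriminator_on ICF disc_term.
Proof.
move=> A [F [hF [f [fhom [g fK _]]]]] a b c.
have eval3_f : f (eval3 disc_term a b c) = @eval3 (ICF_of hF) disc_term (f a) (f b) (f c).
  by rewrite /eval3 (eval_hom _ _ fhom); congr eval; apply: funext => -[|[|n]].
split=> [eq_ab|neq_ab]; apply: (can_inj fK); rewrite eval3_f eval3_disc_term_ICF_of.
  by rewrite eq_ab subrr !mul0r invr0 !mulr0 add0r subr0 mulr1.
have fab : f a - f b != 0 by rewrite subr_eq0; apply/eqP => /(can_inj fK).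
by rewrite -mulrA divff // mulr1 subrr mulr0 addr0.
Qed.

Theorem mainTheorem7 :
  (forall A : ICAlg, ICM A <-> varGen ICF A) /\
  (forall A : ICAlg, ICF A -> forall a b c : car A,
      (a = b -> eval3 disc_term a b c = c) /\
      (a <> b -> eval3 disc_term a b c = a)) /\
  discriminator_variety ICM.
Proof.
split; first exact: ICM_varGen_ICF.
split; first exact: disc_term_ICF.
by exists ICF, disc_term; split; [exact: ICM_varGen_ICF | exact: disc_term_ICF].
Qed.
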